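(* For $x=re^{i\theta}\in C$, the squared norms of the Euclidean and spherical shape operators of $M_x$ at $x$ are $$\|A^E(x)\|^2=\frac{ng}{r^2}\csc^2 g\theta\,(1+\delta\cos g\theta),\qquad \|A^S(x)\|^2=\frac{ng}{r^2}\csc^2 g\theta\,(1+\delta\cos g\theta)-\frac{n}{r^2}.$$
   Context: Let $M^n$ be a compact isoparametric hypersurface in the unit sphere $S^{n+1}\subset\mathbb{R}^{n+2}$ (constant principal curvatures) with $g$ distinct principal curvatures; then $g\in\{1,2,3,4,6\}$. Fix $x_0\in M$ and identify the 2-dimensional normal space $\nu_{x_0}M$ of $M$ in $\mathbb{R}^{n+2}$ with $\mathbb{C}$ so that the two focal submanifolds $M_+$, $M_-$ ($\dim M_+\le\dim M_-$) meet the normal circle at $1$ and $e^{i\pi/g}$ (the intersection points closest to $x_0$). The Weyl chamber is $C=\{re^{i\theta}:r>0,\ 0<\theta<\pi/g\}$. For $k=1,\dots,g$ let $\theta_k=k\pi/g-\pi/2$, $\alpha_k=e^{i\theta_k}$, and $m_k=m_1$ for $k$ odd, $m_k=m_2$ for $k$ even, where $(m_1,m_2)$, $m_1\le m_2$, is the multiplicity data of the principal curvatures; $m_1=m_2$ if $g$ is odd, and $(m_1+m_2)g=2n$. For $x\in C$, $M_x=\{p+\tilde\xi(p):p\in M\}$ where $\tilde\xi$ is the parallel normal field on $M$ with $\tilde\xi(x_0)=x-x_0$; it is an $n$-dimensional isoparametric submanifold of $\mathbb{R}^{n+2}$ lying in $S^{n+1}(|x|)$, with normal space $\nu_{x_0}M$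 at $x$, and $T_xM_x=\oplus_kE_k$, $\dim E_k=m_k$, with Euclidean shape operator $A_\xi|_{E_k}=\langle\xi,-\alpha_k/\langle x,\alpha_k\rangle\rangle\mathrm{Id}$ ($\langle\cdot,\cdot\rangle$ the real inner product on $\mathbb{C}=\mathbb{R}^2$). $H^E(x),A^E(x)$ denote mean curvature vector and shape operator of $M_x$ at $x$ in $\mathbb{R}^{n+2}$; $H^S(x),A^S(x)$ those of $M_x$ as a hypersurface of $S^{n+1}(|x|)$; $\|A\|^2$ is the sum of squared Hilbert–Schmidt norms over an orthonormal normal basis. Set $\delta=(m_2-m_1)/(m_2+m_1)$ if $g\ge2$ and $\delta=0$ if $g=1$, and let $\theta_{\min}\in(0,\pi/g)$ be defined by $\cos g\theta_{\min}=-\delta$. *)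

From Stdlib Require Import Reals Lra Lia.
Open Scope R_scope.

(* The normal plane nu_{x0} M identified with C = R^2, points as pairs. *)
Definition R2 := (R * R)%type.
Definition dot (u v : R2) : R := fst u * fst v + snd u * snd v.
Definition polar (r t : R) : R2 := (r * cos t, r * sin t).

Fixpoint sum1 (g : nat) (f : nat -> R) : R :=
  match g with
  | O => 0
  | S g' => sum1 g' f + f (S g')
  end.

Definition theta_k (g k : nat) : R := INR k * PI / INR g - PI / 2.
Definition alpha (g k : nat) : R2 := polar 1 (theta_k g k).

Definition mult (m1 m2 k : nat) : nat := if Nat.odd k then m1 else m2.

(* Eigenvalue of the Euclidean shape operator A_xi of M_x at x on E_k:
   A_xi|_{E_k} = <xi, -alpha_k/<x,alpha_k>> Id. *)
Definition shape_eig (g : nat) (x xi : R2) (k : nat) : R :=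
  dot xi (alpha g k) * (- / dot x (alpha g k)).

(* Squared Hilbert-Schmidt norm of A_xi on T_x M_x = (+)_k E_k, dim E_k = m_k *)
Definition hs_sq (g m1 m2 : nat) (x xi : R2) : R :=
  sum1 g (fun k => INR (mult m1 m2 k) * (shape_eig g x xi k) ^ 2).

Definition orthonormal2 (u v : R2) : Prop :=
  dot u u = 1 /\ dot v v = 1 /\ dot u v = 0.

(* ||A^E(x)||^2 computed with the orthonormal basis (u,v) of the normal plane *)
Definition normAE_sq (g m1 m2 : nat) (x u v : R2) : R :=
  hs_sq g m1 m2 x u + hs_sq g m1 m2 x v.

Definition delta (g m1 m2 : nat) : R :=
  if (2 <=? g)%nat then (INR m2 - INR m1) / (INR m2 + INR m1) else 0.

(* On E_k the shape operator A_xi of M_x acts by -<xi,alpha_k>/<x,alpha_k>, and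
   <x,alpha_k> = r sin(k pi/g - theta).  Summing the squares over an orthonormal
   basis of the normal plane, Parseval gives sum_k m_k / (r^2 sin^2(k pi/g - theta));
   for the unit normal nu of M_x in the sphere, <nu,alpha_k>^2 = cos^2(k pi/g - theta),
   which subtracts sum_k m_k / r^2 = n / r^2.  The remaining sum is evaluated with
   sum_{k=1}^h csc^2(k pi/h - t) = h^2 csc^2(h t): for odd g all m_k agree; for g = 2h
   the even k give h^2 csc^2(h theta), the odd k h^2 sec^2(h theta), and
   m1 sec^2 y + m2 csc^2 y = 2 (m1 + m2) csc^2(2y) (1 + delta cos 2y). *)

From Stdlib Require Import Reals Lra Lia.
Open Scope R_scope.

Lemma sin2_plus_cos2 x : sin x ^ 2 + cos x ^ 2 = 1.
Proof. pose proof (sin2_cos2 x) as H. unfold Rsqr in H. lra. Qed.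

Lemma inv_sin2_plus_inv_cos2 x : sin (2 * x) <> 0 ->
  / sin x ^ 2 + / cos x ^ 2 = 4 / sin (2 * x) ^ 2.
Proof.
  rewrite sin_2a. intros H.
  assert (Hs : sin x <> 0) by (intro E; apply H; rewrite E; ring).
  assert (Hc : cos x <> 0) by (intro E; apply H; rewrite E; ring).
  transitivity ((sin x ^ 2 + cos x ^ 2) / (sin x ^ 2 * cos x ^ 2)); [field; auto|].
  rewrite sin2_plus_cos2. field. auto.
Qed.

Lemma inv_sin2_triple x : sin (3 * x) <> 0 ->
  / sin x ^ 2 + / sin (x + PI / 3) ^ 2 + / sin (x + 2 * PI / 3) ^ 2
  = 9 / sin (3 * x) ^ 2.
Proof.
  intros H.
  set (q := sqrt 3). set (s := sin x). set (c := cos x).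
  assert (Hq : q * q = 3) by (apply sqrt_sqrt; lra).
  assert (E1 : sin (x + PI / 3) = (s + q * c) / 2).
  { rewrite sin_plus, sin_PI3, cos_PI3. unfold s, c, q. field. }
  assert (E2 : sin (x + 2 * PI / 3) = (q * c - s) / 2).
  { replace (x + 2 * PI / 3) with (PI - (PI / 3 - x)) by field.
    rewrite sin_PI_x, sin_minus, sin_PI3, cos_PI3. unfold s, c, q. field. }
  assert (E3 : sin (3 * x) = 4 * s * ((s + q * c) / 2 * ((q * c - s) / 2))).
  { replace (3 * x) with (2 * x + x) by ring.
    rewrite sin_plus, sin_2a, cos_2a. fold s c.
    transitivity (s * (3 * c ^ 2 - s ^ 2)); [ring|].
    rewrite <- Hq. field. }
  rewrite E1, E2, E3 in *.
  set (A := (s + q * c) / 2) in *. set (B := (q * c - s) / 2) in *.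
  assert (Hs : s <> 0) by (intro E; apply H; rewrite E; ring).
  assert (HA : A <> 0) by (intro E; apply H; rewrite E; ring).
  assert (HB : B <> 0) by (intro E; apply H; rewrite E; ring).
  assert (Hnum : 16 * ((A * B) ^ 2 + s ^ 2 * (A ^ 2 + B ^ 2)) = 9).
  { replace (A * B) with ((q * q * c ^ 2 - s ^ 2) / 4) by (unfold A, B; field).
    replace (A ^ 2 + B ^ 2) with ((s ^ 2 + q * q * c ^ 2) / 2) by (unfold A, B; field).
    rewrite Hq.
    transitivity (9 * (s ^ 2 + c ^ 2) ^ 2); [field|].
    unfold s, c. rewrite sin2_plus_cos2. ring. }
  rewrite <- Hnum. field. auto.
Qed.

Lemma weighted_inv_cos2_sin2 a b y : sin (2 * y) <> 0 -> a + b <> 0 ->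
  a / cos y ^ 2 + b / sin y ^ 2
  = 2 * (a + b) / sin (2 * y) ^ 2 * (1 + (b - a) / (b + a) * cos (2 * y)).
Proof.
  rewrite sin_2a, cos_2a. intros H Hab.
  assert (Hs : sin y <> 0) by (intro E; apply H; rewrite E; ring).
  assert (Hc : cos y <> 0) by (intro E; apply H; rewrite E; ring).
  transitivity ((a * sin y ^ 2 + b * cos y ^ 2) / (sin y ^ 2 * cos y ^ 2)); [field; auto|].
  rewrite <- (sin2_plus_cos2 y). field. rewrite Rplus_comm. auto.
Qed.

Lemma sum1_ext g f h : (forall k, (1 <= k <= g)%nat -> f k = h k) -> sum1 g f = sum1 g h.
Proof.
  induction g as [|g IH]; intros H; cbn [sum1]; [reflexivity|].
  rewrite IH by (intros; apply H; lia). rewrite H by lia. reflexivity.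
Qed.

Lemma sum1_add g f h : sum1 g (fun k => f k + h k) = sum1 g f + sum1 g h.
Proof. induction g as [|g IH]; cbn [sum1]; [ring | rewrite IH; ring]. Qed.

Lemma sum1_sub g f h : sum1 g (fun k => f k - h k) = sum1 g f - sum1 g h.
Proof. induction g as [|g IH]; cbn [sum1]; [ring | rewrite IH; ring]. Qed.

Lemma sum1_scal g c f : sum1 g (fun k => c * f k) = c * sum1 g f.
Proof. induction g as [|g IH]; cbn [sum1]; [ring | rewrite IH; ring]. Qed.

Lemma sum1_const g c : sum1 g (fun _ => c) = INR g * c.
Proof. induction g as [|g IH]; cbn [sum1]; [simpl; ring | rewrite IH, S_INR; ring]. Qed.

Lemma sum1_even_split h f :
  sum1 (2 * h) f = sum1 h (fun j => f (2 * j - 1)%nat) + sum1 h (fun j => f (2 * j)%nat).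
Proof.
  induction h as [|h IH]; [simpl; ring|].
  replace (2 * S h)%nat with (S (S (2 * h))) by lia. cbn [sum1]. rewrite IH.
  replace (2 * S h - 1)%nat with (S (2 * h)) by lia.
  replace (2 * S h)%nat with (S (S (2 * h))) by lia. ring.
Qed.

Lemma mult_odd_index m1 m2 j : (1 <= j)%nat -> mult m1 m2 (2 * j - 1)%nat = m1.
Proof.
  intros Hj. replace (2 * j - 1)%nat with (S (2 * (j - 1))) by lia.
  unfold mult. rewrite Nat.odd_succ, Nat.even_mul. reflexivity.
Qed.

Lemma mult_even_index m1 m2 j : mult m1 m2 (2 * j)%nat = m2.
Proof. unfold mult. rewrite Nat.odd_mul. reflexivity. Qed.

Lemma mult_diag m k : mult m m k = m.
Proof. unfold mult. destruct (Nat.odd k); reflexivity. Qed.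

Lemma sum1_mult g m1 m2 : (Nat.odd g = true -> m1 = m2) ->
  2 * sum1 g (fun k => INR (mult m1 m2 k)) = INR ((m1 + m2) * g).
Proof.
  intros Hodd. destruct (Nat.Even_or_Odd g) as [[h ->] | Hg].
  - rewrite sum1_even_split.
    rewrite (sum1_ext h (fun j => INR (mult m1 m2 (2 * j - 1))) (fun _ => INR m1))
      by (intros; rewrite mult_odd_index by lia; reflexivity).
    rewrite (sum1_ext h (fun j => INR (mult m1 m2 (2 * j))) (fun _ => INR m2))
      by (intros; rewrite mult_even_index; reflexivity).
    rewrite !sum1_const, mult_INR, plus_INR, mult_INR. simpl. ring.
  - rewrite <- (Hodd (proj2 (Nat.odd_spec g) Hg)).
    rewrite (sum1_ext g _ (fun _ => INR m1)) by (intros; rewrite mult_diag; reflexivity).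
    rewrite sum1_const, mult_INR, plus_INR. ring.
Qed.

Definition csc2_sum (g : nat) (t : R) : R :=
  sum1 g (fun k => / sin (INR k * PI / INR g - t) ^ 2).

(* This holds for every g; the cases g <= 3 are all the theorem needs. *)
Lemma csc2_sum_closed g t : (1 <= g <= 3)%nat -> sin (INR g * t) <> 0 ->
  csc2_sum g t = INR g ^ 2 / sin (INR g * t) ^ 2.
Proof.
  intros Hg. unfold csc2_sum.
  assert (Hcases : g = 1%nat \/ g = 2%nat \/ g = 3%nat) by lia.
  destruct Hcases as [-> | [-> | ->]]; cbn [sum1]; simpl INR; intros H.
  - replace (1 * PI / 1 - t) with (PI - t) by field.
    rewrite sin_PI_x, Rmult_1_l in *. field. auto.
  - replace (1 * PI / (1 + 1) - t) with (PI / 2 - t) by field.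
    replace ((1 + 1) * PI / (1 + 1) - t) with (PI - t) by field.
    replace (1 + 1) with 2 in * by ring.
    rewrite sin_shift, sin_PI_x, Rplus_0_l, Rplus_comm, (inv_sin2_plus_inv_cos2 t H).
    field. auto.
  - set (x := PI / 3 - t).
    replace (1 * PI / (1 + 1 + 1) - t) with x by (unfold x; field).
    replace ((1 + 1) * PI / (1 + 1 + 1) - t) with (x + PI / 3) by (unfold x; field).
    replace ((1 + 1 + 1) * PI / (1 + 1 + 1) - t) with (x + 2 * PI / 3) by (unfold x; field).
    replace (1 + 1 + 1) with 3 in * by ring.
    assert (Hx : sin (3 * x) = sin (3 * t)).
    { unfold x. replace (3 * (PI / 3 - t)) with (PI - 3 * t) by field. apply sin_PI_x. }
    rewrite <- Hx in *. rewrite Rplus_0_l, (inv_sin2_triple x H). field. auto.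
Qed.

Lemma sin_mul_pos g t : (0 < g)%nat -> 0 < t < PI / INR g -> 0 < sin (INR g * t).
Proof.
  intros Hg Ht. apply lt_0_INR in Hg.
  assert (HPI : INR g * (PI / INR g) = PI) by (field; lra).
  apply sin_gt_0; nra.
Qed.

Lemma sin_shifted_pos g k t : (1 <= k <= g)%nat -> 0 < t < PI / INR g ->
  0 < sin (INR k * PI / INR g - t).
Proof.
  intros Hk Ht.
  assert (Hg : 0 < INR g) by (apply lt_0_INR; lia).
  assert (Hk1 : 1 <= INR k) by (apply (le_INR 1); lia).
  assert (Hkg : INR k <= INR g) by (apply le_INR; lia).
  assert (HPI : INR g * (PI / INR g) = PI) by (field; lra).
  replace (INR k * PI / INR g) with (INR k * (PI / INR g)) by (field; lra).
  apply sin_gt_0; nra.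
Qed.

Definition weighted_csc2_sum (g m1 m2 : nat) (t : R) : R :=
  sum1 g (fun k => INR (mult m1 m2 k) / sin (INR k * PI / INR g - t) ^ 2).

Lemma weighted_csc2_sum_diag g m t : weighted_csc2_sum g m m t = INR m * csc2_sum g t.
Proof.
  unfold weighted_csc2_sum, csc2_sum. rewrite <- sum1_scal.
  apply sum1_ext. intros k _. rewrite mult_diag. reflexivity.
Qed.

Lemma weighted_csc2_sum_even h m1 m2 t : (1 <= h <= 3)%nat -> sin (INR (2 * h) * t) <> 0 ->
  weighted_csc2_sum (2 * h) m1 m2 t
  = INR h ^ 2 * (INR m1 / cos (INR h * t) ^ 2 + INR m2 / sin (INR h * t) ^ 2).
Proof.
  intros Hh H2h.
  assert (Hh0 : INR h <> 0) by (apply not_0_INR; lia).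
  replace (INR (2 * h) * t) with (2 * (INR h * t)) in H2h by (rewrite mult_INR; simpl; ring).
  pose proof H2h as H. rewrite sin_2a in H.
  assert (Hs : sin (INR h * t) <> 0) by (intro E; apply H; rewrite E; ring).
  assert (Hc : cos (INR h * t) <> 0) by (intro E; apply H; rewrite E; ring).
  unfold weighted_csc2_sum. rewrite sum1_even_split.
  (* odd indices 2j-1 are the even ones shifted by pi/(2h), which turns csc into sec *)
  rewrite (sum1_ext h
    (fun j => INR (mult m1 m2 (2 * j - 1)) / sin (INR (2 * j - 1) * PI / INR (2 * h) - t) ^ 2)
    (fun j => INR m1 * / sin (INR j * PI / INR h - (t + PI / (2 * INR h))) ^ 2)).
  2:{ intros j Hj. rewrite mult_odd_index by lia.
      rewrite minus_INR, !mult_INR by lia. unfold Rdiv. do 4 f_equal. simpl. field. auto. }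
  rewrite (sum1_ext h
    (fun j => INR (mult m1 m2 (2 * j)) / sin (INR (2 * j) * PI / INR (2 * h) - t) ^ 2)
    (fun j => INR m2 * / sin (INR j * PI / INR h - t) ^ 2)).
  2:{ intros j Hj. rewrite mult_even_index, !mult_INR.
      unfold Rdiv. do 4 f_equal. simpl. field. auto. }
  rewrite !sum1_scal.
  change (sum1 h (fun j => / sin (INR j * PI / INR h - (t + PI / (2 * INR h))) ^ 2))
    with (csc2_sum h (t + PI / (2 * INR h))).
  change (sum1 h (fun j => / sin (INR j * PI / INR h - t) ^ 2)) with (csc2_sum h t).
  assert (Hshift : INR h * (t + PI / (2 * INR h)) = INR h * t + PI / 2) by (field; auto).
  assert (Hcos : sin (INR h * (t + PI / (2 * INR h))) = cos (INR h * t)).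
  { rewrite Hshift, sin_plus, sin_PI2, cos_PI2. ring. }
  rewrite !csc2_sum_closed, Hcos by (try rewrite Hcos; auto).
  field. auto.
Qed.

Lemma delta_diag g m : delta g m m = 0.
Proof.
  unfold delta. destruct (2 <=? g)%nat; [|reflexivity].
  unfold Rdiv. rewrite Rminus_diag. ring.
Qed.

Lemma weighted_csc2_sum_closed g m1 m2 n t
  (Hg : g = 1%nat \/ g = 2%nat \/ g = 3%nat \/ g = 4%nat \/ g = 6%nat)
  (Hm1 : (1 <= m1)%nat) (Hodd : Nat.odd g = true -> m1 = m2)
  (Hn : ((m1 + m2) * g = 2 * n)%nat) (Ht : 0 < t < PI / INR g) :
  weighted_csc2_sum g m1 m2 t
  = INR n * INR g / sin (INR g * t) ^ 2 * (1 + delta g m1 m2 * cos (INR g * t)).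
Proof.
  assert (Hsin : 0 < sin (INR g * t)) by (apply sin_mul_pos; [lia | auto]).
  assert (Hn' : INR n = INR ((m1 + m2) * g) / 2) by (rewrite Hn, mult_INR; simpl; field).
  assert (Hm : 0 < INR m1 + INR m2)
    by (pose proof (pos_INR m2); pose proof (le_INR 1 m1 Hm1); simpl in *; lra).
  rewrite Hn', mult_INR, plus_INR.
  destruct (Nat.Even_or_Odd g) as [[h Hh] | Hgodd].
  - subst g. rewrite weighted_csc2_sum_even by (lia || lra).
    replace (INR (2 * h)) with (2 * INR h) in * by (rewrite mult_INR; reflexivity).
    replace (2 * INR h * t) with (2 * (INR h * t)) in * by ring.
    rewrite weighted_inv_cos2_sin2 by lra.
    unfold delta. replace (2 <=? 2 * h)%nat with true by (symmetry; apply Nat.leb_le; lia).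
    field. lra.
  - rewrite <- (Hodd (proj2 (Nat.odd_spec g) Hgodd)) in *.
    rewrite weighted_csc2_sum_diag, csc2_sum_closed, delta_diag by (destruct Hgodd; lia || lra).
    field. lra.
Qed.

Lemma dot_polar_alpha g k r t :
  dot (polar r t) (alpha g k) = r * sin (INR k * PI / INR g - t).
Proof.
  unfold dot, polar, alpha, theta_k; simpl.
  rewrite cos_minus, sin_minus, cos_PI2, sin_PI2, sin_minus. ring.
Qed.

Lemma dot_polar1_polar1 t : dot (polar 1 t) (polar 1 t) = 1.
Proof.
  unfold dot, polar; simpl. transitivity (sin t ^ 2 + cos t ^ 2); [ring | apply sin2_plus_cos2].
Qed.

Lemma dot_alpha_alpha g k : dot (alpha g k) (alpha g k) = 1.
Proof. apply dot_polar1_polar1. Qed.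

Lemma orthonormal2_normal_polar nu r t : r <> 0 ->
  dot nu nu = 1 -> dot nu (polar r t) = 0 -> orthonormal2 nu (polar 1 t).
Proof.
  intros Hr Hnu Hx. split; [|split]; [auto | apply dot_polar1_polar1 |].
  apply (Rmult_eq_reg_l r); [|auto].
  transitivity (dot nu (polar r t)); [unfold dot, polar; simpl; ring | rewrite Hx; ring].
Qed.

Lemma parseval2 u v w : orthonormal2 u v -> dot u w ^ 2 + dot v w ^ 2 = dot w w.
Proof.
  destruct u as [a b], v as [c d], w as [w1 w2].
  unfold orthonormal2, dot; simpl. intros [Hu [Hv Huv]].
  assert (Had : a * a = d * d).
  { transitivity (a * a * (c * c + d * d) - d * d * (a * a + b * b) + d * d);
      [rewrite Hu, Hv; ring|].
    transitivity ((a * c - b * d) * (a * c + b * d) + d * d); [ring|].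
    rewrite Huv. ring. }
  assert (Hab : a * b + c * d = 0).
  { transitivity (a * b * (c * c + d * d) + c * d * (a * a + b * b)); [rewrite Hu, Hv; ring|].
    transitivity ((a * c + b * d) * (a * d + b * c)); [ring|].
    rewrite Huv. ring. }
  transitivity ((a * a + c * c) * (w1 * w1) + 2 * (a * b + c * d) * (w1 * w2)
                + (b * b + d * d) * (w2 * w2)); [ring|].
  replace (a * a + c * c) with 1 by lra. replace (b * b + d * d) with 1 by lra.
  rewrite Hab. ring.
Qed.

Lemma shape_eig_sq g x xi k : dot x (alpha g k) <> 0 ->
  shape_eig g x xi k ^ 2 = dot xi (alpha g k) ^ 2 / dot x (alpha g k) ^ 2.
Proof. intros H. unfold shape_eig. field. auto. Qed.

Section ShapeOperatorAtPolar.

Variables (g m1 m2 : nat) (r t : R).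
Hypothesis Hr : r <> 0.
Hypothesis Hsin : forall k, (1 <= k <= g)%nat -> sin (INR k * PI / INR g - t) <> 0.

Lemma normAE_sq_polar u v : orthonormal2 u v ->
  normAE_sq g m1 m2 (polar r t) u v = / r ^ 2 * weighted_csc2_sum g m1 m2 t.
Proof.
  intros Huv. unfold normAE_sq, hs_sq, weighted_csc2_sum.
  rewrite <- sum1_add, <- sum1_scal. apply sum1_ext. intros k Hk.
  assert (Hx : dot (polar r t) (alpha g k) <> 0)
    by (rewrite dot_polar_alpha; apply Rmult_integral_contrapositive; auto).
  rewrite !shape_eig_sq by auto.
  transitivity (INR (mult m1 m2 k) * (dot u (alpha g k) ^ 2 + dot v (alpha g k) ^ 2)
                / dot (polar r t) (alpha g k) ^ 2); [field; auto|].
  rewrite parseval2, dot_alpha_alpha, dot_polar_alpha by auto.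
  field. split; auto.
Qed.

Lemma hs_sq_normal_polar nu : dot nu nu = 1 -> dot nu (polar r t) = 0 ->
  hs_sq g m1 m2 (polar r t) nu
  = / r ^ 2 * weighted_csc2_sum g m1 m2 t - / r ^ 2 * sum1 g (fun k => INR (mult m1 m2 k)).
Proof.
  intros Hnu Hx. pose proof (orthonormal2_normal_polar nu r t Hr Hnu Hx) as Hon.
  unfold hs_sq, weighted_csc2_sum. rewrite <- !sum1_scal, <- sum1_sub.
  apply sum1_ext. intros k Hk.
  assert (Hxa : dot (polar r t) (alpha g k) <> 0)
    by (rewrite dot_polar_alpha; apply Rmult_integral_contrapositive; auto).
  pose proof (parseval2 _ _ (alpha g k) Hon) as Hpar.
  rewrite dot_alpha_alpha, dot_polar_alpha in Hpar.
  rewrite shape_eig_sq, dot_polar_alpha by auto.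
  replace (dot nu (alpha g k) ^ 2) with (1 - (1 * sin (INR k * PI / INR g - t)) ^ 2) by lra.
  field. split; auto.
Qed.

End ShapeOperatorAtPolar.

Theorem lemma4p7 (g m1 m2 n : nat) (r theta : R)
  (Hg : g = 1%nat \/ g = 2%nat \/ g = 3%nat \/ g = 4%nat \/ g = 6%nat)
  (Hm1 : (1 <= m1)%nat) (Hm12 : (m1 <= m2)%nat)
  (Hodd : Nat.odd g = true -> m1 = m2)
  (Hn : ((m1 + m2) * g = 2 * n)%nat)
  (Hr : 0 < r) (Hth : 0 < theta < PI / INR g) :
  let x := polar r theta in
  (forall u v : R2, orthonormal2 u v ->
     normAE_sq g m1 m2 x u v
     = INR n * INR g / r ^ 2 * / (sin (INR g * theta)) ^ 2
         * (1 + delta g m1 m2 * cos (INR g * theta))) /\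
  (forall nu : R2, dot nu nu = 1 -> dot nu x = 0 ->
     hs_sq g m1 m2 x nu
     = INR n * INR g / r ^ 2 * / (sin (INR g * theta)) ^ 2
         * (1 + delta g m1 m2 * cos (INR g * theta)) - INR n / r ^ 2).
Proof.
  intros x.
  assert (Hr0 : r <> 0) by lra.
  assert (Hsin : forall k, (1 <= k <= g)%nat -> sin (INR k * PI / INR g - theta) <> 0)
    by (intros k Hk; apply Rgt_not_eq, sin_shifted_pos; auto).
  assert (Hsing : sin (INR g * theta) <> 0) by (apply Rgt_not_eq, sin_mul_pos; [lia | auto]).
  assert (Hmult : sum1 g (fun k => INR (mult m1 m2 k)) = INR n).
  { pose proof (sum1_mult g m1 m2 Hodd) as H. rewrite Hn, mult_INR in H. simpl in H. lra. }
  split.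
  - intros u v Huv. unfold x.
    rewrite normAE_sq_polar, (weighted_csc2_sum_closed g m1 m2 n) by auto.
    field. auto.
  - intros nu Hnu Hnux. unfold x in *.
    rewrite hs_sq_normal_polar, (weighted_csc2_sum_closed g m1 m2 n), Hmult by auto.
    field. auto.
Qed.
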